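(* Let $\{(\mathbf{x}^{(i)},y^{(i)})\}_{i=1}^n$ with $\mathbf{x}^{(i)}\in\mathbb{R}^d$, $y^{(i)}\in\{-1,1\}$, $\|\mathbf{x}^{(i)}\|_2\le1$, and suppose there is $\mathbf{w}^*\in\mathbb{R}^d$ with $\|\mathbf{w}^*\|_2=1$ and $\min_{i\in[n]}y^{(i)}\mathbf{x}^{(i)\top}\mathbf{w}^*=\gamma>0$. Let $A\in\mathbb{R}^{n\times d}$ have $i$-th row $y^{(i)}\mathbf{x}^{(i)\top}$, let $\alpha_t=t$, $g(\mathbf{w},\mathbf{p})=\mathbf{p}^{\top}A\mathbf{w}-\tfrac12\|\mathbf{w}\|_2^2$, $\mathbf{p}_0=\tfrac{\mathbf{1}}{n}$, and for $j\ge0$ let $h_j(\mathbf{w})=-g(\mathbf{w},\mathbf{p}_j)$, $\ell_j(\mathbf{p})=g(\mathbf{w}_j,\mathbf{p})$. For $t=1,\dots,T$ define $\mathbf{w}_t=\arg\min_{\mathbf{w}\in\mathbb{R}^d}\sum_{j=1}^{t-1}\alpha_jh_j(\mathbf{w})+\alpha_th_{t-1}(\mathbf{w})$, and then $\mathbf{p}_t=\arg\min_{\mathbf{p}\in\Delta^n}\tfrac14\sum_{s=1}^{t}\alpha_s\ell_s(\mathbf{p})+D_E(\mathbf{p},\tfrac{\mathbf{1}}{n})$, and let $\overline{\mathbf{w}}_T=\frac{\sum_{t=1}^T\alpha_t\mathbf{w}_t}{\sum_{t=1}^T\alpha_t}$. Define the weighted regrets $R^{\mathbf{w}}=\sum_{t=1}^T\alpha_th_t(\mathbf{w}_t)-\min_{\mathbf{w}\in\mathbb{R}^d}\sum_{t=1}^T\alpha_th_t(\mathbf{w})$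 and $R^{\mathbf{p}}=\sum_{t=1}^T\alpha_t\ell_t(\mathbf{p}_t)-\min_{\mathbf{p}\in\Delta^n}\sum_{t=1}^T\alpha_t\ell_t(\mathbf{p})$. Then $R^{\mathbf{w}}\le 2\sum_{t=1}^T\|\mathbf{p}_t-\mathbf{p}_{t-1}\|_1^2$ and $R^{\mathbf{p}}\le 4\log n-2\sum_{t=1}^T\|\mathbf{p}_t-\mathbf{p}_{t-1}\|_1^2$. Moreover, there is a universal constant $C>0$ such that whenever $T\ge C\sqrt{\log n}/\gamma$, $\overline{\mathbf{w}}_T$ has non-negative margin, i.e. $\min_{i\in[n]}y^{(i)}\mathbf{x}^{(i)\top}\overline{\mathbf{w}}_T\ge0$.
   Context: $\Delta^n$ is the probability simplex in $\mathbb{R}^n$; $\mathbf{1}$ the all-ones vector; $D_E(\mathbf{p},\mathbf{q})=\sum_ip_i\log(p_i/q_i)$ is the Bregman divergence of the negative entropy $E(\mathbf{p})=\sum_ip_i\log p_i$ (the KL divergence). These dynamics are the game-theoretic form of the Smooth Perceptron of Soheili and Peña. *)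

From mathcomp Require Import all_boot all_order all_algebra.
From mathcomp Require Import all_classical all_reals all_analysis.
Set Implicit Arguments. Unset Strict Implicit. Unset Printing Implicit Defensive.
Import Order.TTheory GRing.Theory Num.Theory.
Local Open Scope ring_scope.

Section Defs.
Variables (R : realType) (n d : nat).

Definition dotd (u v : 'I_d -> R) : R := \sum_(k < d) u k * v k.
Definition sqnorm2 (u : 'I_d -> R) : R := \sum_(k < d) u k ^+ 2.
Definition norm1 (u : 'I_n -> R) : R := \sum_(i < n) `|u i|.

Definition simplex (p : 'I_n -> R) : Prop :=
  (forall i, 0 <= p i) /\ \sum_(i < n) p i = 1.

Definition uniform : 'I_n -> R := fun _ => (n%:R)^-1.

(* KL divergence = Bregman divergence of the negative entropy
   (with 0 log 0 = 0: the term p_i * ln(...) vanishes when p_i = 0) *)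
Definition KL (p q : 'I_n -> R) : R := \sum_(i < n) p i * ln (p i / q i).

Definition Amat (x : 'I_n -> 'I_d -> R) (y : 'I_n -> R) : 'I_n -> 'I_d -> R :=
  fun i k => y i * x i k.

Definition gfun (A : 'I_n -> 'I_d -> R) (w : 'I_d -> R) (p : 'I_n -> R) : R :=
  \sum_(i < n) p i * dotd (A i) w - 2^-1 * sqnorm2 w.

Definition alpha (t : nat) : R := t%:R.

Definition obj_w A (p : nat -> 'I_n -> R) (t : nat) (w : 'I_d -> R) : R :=
  \sum_(1 <= j < t) alpha j * (- gfun A w (p j)) + alpha t * (- gfun A w (p t.-1)).

Definition obj_p A (w : nat -> 'I_d -> R) (t : nat) (q : 'I_n -> R) : R :=
  4^-1 * \sum_(1 <= s < t.+1) alpha s * gfun A (w s) q + KL q uniform.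

Definition wbar (w : nat -> 'I_d -> R) (T : nat) : 'I_d -> R :=
  fun k => (\sum_(1 <= t < T.+1) alpha t * w t k) / \sum_(1 <= t < T.+1) alpha t.

Definition data_ok (x : 'I_n -> 'I_d -> R) (y : 'I_n -> R) (gamma : R) : Prop :=
  (0 < n)%N /\
  (forall i, y i = 1 \/ y i = -1) /\
  (forall i, sqnorm2 (x i) <= 1) /\
  (exists wstar : 'I_d -> R, sqnorm2 wstar = 1 /\
     (forall i, gamma <= dotd (Amat x y i) wstar) /\
     (exists i, dotd (Amat x y i) wstar = gamma)) /\
  0 < gamma.

Definition dynamics (A : 'I_n -> 'I_d -> R) (T : nat)
    (w : nat -> 'I_d -> R) (p : nat -> 'I_n -> R) : Prop :=
  p 0%N = uniform /\
  (forall t, (1 <= t <= T)%N ->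
     forall w' : 'I_d -> R, obj_w A p t (w t) <= obj_w A p t w') /\
  (forall t, (1 <= t <= T)%N ->
     simplex (p t) /\ forall q, simplex q -> obj_p A w t (p t) <= obj_p A w t q).

End Defs.

(** The [w]-player is optimistic follow-the-leader on the quadratic losses
    [h_t(w) = |w|^2 / 2 - <A^T p_t, w>].  The value of the leader is explicit, and the
    optimistic iterate loses at most [a_t^2 / (2 S_t) * |A^T (p_t - p_(t-1))|^2] against it,
    where [S_t = a_1 + ... + a_t]; for [a_t = t] the factor is at most [1], and
    [|A^T z| <= |z|_1] because the rows of [A] have norm at most [1].
    The [p]-player is follow-the-regularized-leader with the KL regulariser: on the simplex
    its objective is the KL divergence to a Gibbs distribution plus a constant, so by
    Pinsker's inequality it grows by at least [|q - p_t|_1^2 / 2] away from its minimiser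
    [p_t], and the be-the-leader telescoping together with [KL(q, 1/n) <= log n] gives the
    second bound.  Adding both regrets cancels the movement terms; playing [gamma w*]
    against the [p_t] and a vertex [e_i] against the [w_t] then gives
    [S_T <A_i, wbar_T> >= S_T gamma^2 / 2 - 4 log n], which is nonnegative as soon as
    [T >= 4 sqrt (log n) / gamma]. *)

From mathcomp Require Import all_boot all_order all_algebra.
From mathcomp Require Import all_classical all_reals all_analysis.
From mathcomp Require Import ring lra.
Set Implicit Arguments. Unset Strict Implicit. Unset Printing Implicit Defensive.
Import Order.TTheory GRing.Theory Num.Theory.
Import numFieldNormedType.Exports.
Local Open Scope ring_scope.
Local Open Scope classical_set_scope.


Section Entropy.
Variable R : realType.

Lemma is_derive_ln1B (x : R) : x < 1 -> is_derive x 1 (fun y => ln (1 - y)) (- (1 - x)^-1).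
Proof.
move=> x_lt1.
have dB : is_derive x 1 (fun y : R => 1 - y) (-1) by apply: is_derive_eq; ring.
have dln : is_derive (1 - x) 1 (@ln R) (1 - x)^-1 by apply: is_derive1_ln; rewrite subr_gt0.
by have := @is_derive1_comp R _ (fun y => 1 - y) _ _ _ dln dB; rewrite mulrN1.
Qed.

Lemma binary_pinsker (a b : R) : 0 < b -> b <= a -> a <= 1 ->
  2 * (a - b) ^+ 2 <= a * ln (a / b) + (1 - a) * ln ((1 - a) / (1 - b)).
Proof.
move=> b_gt0 le_ba a_le1.
have a_gt0 : 0 < a by exact: lt_le_trans le_ba.
pose f x := - a * ln x - (1 - a) * ln (1 - x) - 2 * (a - x) ^+ 2.
have df (x : R) : 0 < x -> x < 1 ->
    is_derive x 1 f ((x - a) * (1 - 2 * x) ^+ 2 / (x * (1 - x))).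
  move=> x_gt0 x_lt1; have := is_derive1_ln x_gt0; have := is_derive_ln1B x_lt1.
  move=> d1 d2; apply: is_derive_eq; rewrite -![_ *: _]/(_ * _).
  by field; rewrite !gt_eqF ?subr_gt0.
have f_cont : {within `[b, a], continuous f}.
  have [a1|a_neq1] := eqVneq a 1.
    have -> : f = fun x => - ln x - 2 * (1 - x) ^+ 2.
      by apply/funext => x; rewrite /f a1 subrr mul0r subr0 mulN1r.
    apply: derivable_within_continuous => x; rewrite in_itv /= => /andP[bx _].
    have x_gt0 := lt_le_trans b_gt0 bx.
    by have := is_derive1_ln x_gt0 => d; apply: ex_derive.
  apply: derivable_within_continuous => x; rewrite in_itv /= => /andP[bx xa].
  have a_lt1 : a < 1 by rewrite lt_neqAle a_neq1.
  by have [] := df x (lt_le_trans b_gt0 bx) (le_lt_trans xa a_lt1).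
have df_itv (x : R) : x \in `]b, a[%R -> 0 < x < 1.
  by rewrite in_itv /= => /andP[bx xa]; rewrite (lt_trans b_gt0 bx) (lt_le_trans xa a_le1).
have f_derivable (x : R) : x \in `]b, a[%R -> derivable f x 1.
  by move=> /df_itv /andP[x_gt0 x_lt1]; have [] := df x x_gt0 x_lt1.
have f'_le0 (x : R) : x \in `]b, a[%R -> f^`() x <= 0.
  move=> x_itv; have /andP[x_gt0 x_lt1] := df_itv x x_itv.
  have := df x x_gt0 x_lt1 => dfx; rewrite derive1E derive_val.
  rewrite pmulr_lle0 ?invr_gt0 ?mulr_gt0 ?subr_gt0 // mulr_le0_ge0 ?sqr_ge0 // subr_le0.
  by move: x_itv; rewrite in_itv /= => /andP[_ /ltW].
have fab : f a <= f b.
  by apply: (ler0_derive1_le_cc f_derivable f'_le0 f_cont); rewrite ?in_itv /= ?le_ba ?lexx.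
move: fab; rewrite /f subrr expr0n /= mulr0 subr0.
have [->|a_neq1] := eqVneq a 1.
  by rewrite subrr !mul0r !subr0 ln1 mulr0 mul1r div1r lnV ?posrE //; lra.
have a_lt1 : a < 1 by rewrite lt_neqAle a_neq1.
have b_lt1 := le_lt_trans le_ba a_lt1.
by rewrite !ln_div ?posrE ?subr_gt0 //; lra.
Qed.

Lemma ln_le_subr1 (y : R) : 0 < y -> ln y <= y - 1.
Proof. by move=> y_gt0; have := @le_ln1Dx R (y - 1); rewrite subrKC; apply; lra. Qed.

Lemma mul_ln_div_ge (a b c : R) : 0 <= a -> 0 < b -> 0 < c ->
  a - b * c <= a * ln (a / b) - a * ln c.
Proof.
move=> a_ge0 b_gt0 c_gt0; have [->|a_neq0] := eqVneq a 0.
  by rewrite !mul0r subrr sub0r oppr_le0 ltW ?mulr_gt0.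
have a_gt0 : 0 < a by rewrite lt_neqAle eq_sym a_neq0.
have := ln_le_subr1 (divr_gt0 (mulr_gt0 b_gt0 c_gt0) a_gt0).
rewrite !lnM ?lnV ?posrE ?mulr_gt0 ?invr_gt0 // -(ler_pM2l a_gt0).
have -> : a * (b * c / a - 1) = b * c - a by field; rewrite gt_eqF.
lra.
Qed.

Lemma log_sum_ineq (I : finType) (P : pred I) (a b : I -> R) :
  (forall i, 0 <= a i) -> (forall i, 0 < b i) ->
  (\sum_(i | P i) a i) * ln ((\sum_(i | P i) a i) / \sum_(i | P i) b i)
    <= \sum_(i | P i) a i * ln (a i / b i).
Proof.
move=> a_ge0 b_gt0.
set A := \sum_(i | P i) a i; set B := \sum_(i | P i) b i.
have [A0|A_neq0] := eqVneq A 0.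
  rewrite A0 mul0r big1 // => i Pi.
  by rewrite (psumr_eq0P (fun i _ => a_ge0 i) A0) ?mul0r.
have A_gt0 : 0 < A by rewrite lt_neqAle eq_sym A_neq0 sumr_ge0.
have [i0 P_i0] : exists i, P i.
  apply/existsP; apply: contraNT A_neq0 => /existsPn noP.
  by rewrite /A big_pred0 // => i; exact: negbTE.
have B_gt0 : 0 < B.
  by rewrite /B (bigD1 i0) //= ltr_pwDl ?sumr_ge0 // => i _; exact: ltW.
(* Termwise [a ln (a / b) - a ln (A / B) >= a - b A / B], and the right-hand sides sum to [0]. *)
rewrite -subr_ge0 mulr_suml -sumrB.
apply: le_trans (ler_sum _ (fun i _ => mul_ln_div_ge (a_ge0 i) (b_gt0 i) (divr_gt0 A_gt0 B_gt0))).
by rewrite sumrB -mulr_suml -/A -/B mulrC divfK ?gt_eqF // subrr.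
Qed.

Variable n : nat.
Implicit Types p q pi : 'I_n -> R.

Lemma KL_id pi : (forall i, 0 < pi i) -> KL pi pi = 0.
Proof. by move=> pi_gt0; rewrite /KL big1 // => i _; rewrite divff ?gt_eqF // ln1 mulr0. Qed.

Lemma norm1_eq0 p q : norm1 (fun i => p i - q i) = 0 -> p = q.
Proof.
move=> h; apply/funext => i.
have /eqP := psumr_eq0P (fun i _ => normr_ge0 (p i - q i)) h (i := i) isT.
by rewrite normr_eq0 subr_eq0 => /eqP.
Qed.

Lemma pinsker pi q : (forall i, 0 < pi i) -> \sum_i pi i = 1 ->
  simplex q -> 2^-1 * norm1 (fun i => q i - pi i) ^+ 2 <= KL q pi.
Proof.
move=> pi_gt0 pi1 [q_ge0 q1].
(* Split the indices where [q] dominates [pi] and reduce to two points. *)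
pose P i := pi i <= q i.
set qP := \sum_(i | P i) q i; set piP := \sum_(i | P i) pi i.
have sumC (f : 'I_n -> R) : \sum_i f i = 1 -> \sum_(i | ~~ P i) f i = 1 - \sum_(i | P i) f i.
  by move=> f1; rewrite -f1 [X in _ = X - _](bigID P) /= addrAC subrr add0r.
have norm1E : norm1 (fun i => q i - pi i) = 2 * (qP - piP).
  rewrite /norm1 (bigID P) /=.
  rewrite (eq_bigr (fun i => q i - pi i)) => [|i P_i]; last by rewrite ger0_norm ?subr_ge0.
  rewrite [X in _ + X](eq_bigr (fun i => pi i - q i)) => [|i]; last first.
    by rewrite -ltNge => lt_qpi; rewrite ltr0_norm ?opprB ?subr_lt0.
  by rewrite !sumrB sumC // sumC // -/qP -/piP; ring.
have KL_split : qP * ln (qP / piP) + (1 - qP) * ln ((1 - qP) / (1 - piP)) <= KL q pi.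
  rewrite /KL (bigID P) /= -(sumC q) // -(sumC pi) //.
  by apply: lerD; apply: log_sum_ineq.
have le_piP_qP : piP <= qP by apply: ler_sum.
have le_qP1 : qP <= 1 by rewrite -subr_ge0 -(sumC q) // sumr_ge0.
have piP_ge0 : 0 <= piP by apply: sumr_ge0 => i _; exact: ltW.
rewrite norm1E; have [piP0|piP_neq0] := eqVneq piP 0.
  have qP0 : qP = 0.
    rewrite /qP big1 // => i P_i.
    by have := pi_gt0 i; rewrite (psumr_eq0P (fun i _ => ltW (pi_gt0 i)) piP0 (i := i)) ?ltxx.
  by move: KL_split; rewrite qP0 piP0 !subr0 divr1 ln1 !mulr0 !mul0r expr0n /= mulr0 add0r.
have piP_gt0 : 0 < piP by rewrite lt_neqAle eq_sym piP_neq0.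
have := binary_pinsker piP_gt0 le_piP_qP le_qP1.
lra.
Qed.

Lemma KL_ge0 (pi q : 'I_n -> R) : (forall i, 0 < pi i) -> \sum_i pi i = 1 ->
  simplex q -> 0 <= KL q pi.
Proof.
by move=> pi_gt0 pi1 sq; apply: le_trans (pinsker pi_gt0 pi1 sq); rewrite mulr_ge0 ?sqr_ge0.
Qed.

Lemma uniform_gt0 : (0 < n)%N -> forall i, 0 < @uniform R n i.
Proof. by move=> n_gt0 i; rewrite /uniform invr_gt0 ltr0n. Qed.

Lemma sum_uniform : (0 < n)%N -> \sum_i @uniform R n i = 1.
Proof.
by move=> n_gt0; rewrite /uniform sumr_const card_ord -[_ *+ n]mulr_natr mulVf // pnatr_eq0 -lt0n.
Qed.

Lemma KL_uniform_le q : simplex q -> KL q (@uniform R n) <= ln n%:R.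
Proof.
case=> q_ge0 q1; have -> : ln n%:R = \sum_i q i * ln n%:R :> R by rewrite -mulr_suml q1 mul1r.
apply: ler_sum => i _.
have [->|qi_neq0] := eqVneq (q i) 0; first by rewrite !mul0r.
have qi_gt0 : 0 < q i by rewrite lt_neqAle eq_sym qi_neq0 q_ge0.
have n_gt0 : 0 < n%:R :> R by rewrite ltr0n (leq_ltn_trans _ (ltn_ord i)).
rewrite ler_pM2l // /uniform invrK lnM ?posrE // gerDr ln_le0 //.
by rewrite -q1 (bigD1 i) //= lerDl sumr_ge0.
Qed.

Lemma argmin_linear_KL_growth (c pi0 : 'I_n -> R) (F : ('I_n -> R) -> R) ps :
  (forall i, 0 < pi0 i) ->
  (forall q, simplex q -> F q = \sum_i c i * q i + KL q pi0) ->
  simplex ps -> (forall q, simplex q -> F ps <= F q) ->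
  forall q, simplex q -> 2^-1 * norm1 (fun i => q i - ps i) ^+ 2 <= F q - F ps.
Proof.
move=> pi0_gt0 FE sps ps_min.
have [i0 _] : exists i : 'I_n, true.
  have : \sum_i ps i != 0 by rewrite sps.2 oner_neq0.
  by rewrite psumr_neq0 => [/hasP[i _ _]|i _]; [exists i|exact: sps.1].
pose e i := pi0 i * expR (- c i); pose Z := \sum_i e i.
have e_gt0 i : 0 < e i by rewrite mulr_gt0 ?expR_gt0.
have Z_gt0 : 0 < Z.
  by rewrite /Z (bigD1 i0) //= ltr_pwDl ?sumr_ge0 // => i _; exact: ltW.
pose gibbs i := e i / Z.
have gibbs_gt0 i : 0 < gibbs i by rewrite divr_gt0.
have gibbs1 : \sum_i gibbs i = 1 by rewrite -mulr_suml divff ?gt_eqF.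
have FE_gibbs q : simplex q -> F q = KL q gibbs - ln Z.
  move=> sq; have -> : ln Z = \sum_i q i * ln Z by rewrite -mulr_suml sq.2 mul1r.
  rewrite FE // /KL -sumrB -big_split /=.
  apply: eq_bigr => i _; have [->|qi_neq0] := eqVneq (q i) 0.
    by rewrite !(mul0r, mulr0) subr0 addr0.
  have qi_gt0 : 0 < q i by rewrite lt_neqAle eq_sym qi_neq0 sq.1.
  rewrite /gibbs /e !ln_div ?lnM ?posrE ?mulr_gt0 ?invr_gt0 ?expR_gt0 ?pi0_gt0 //.
  by rewrite expRK; ring.
have ps_gibbs : ps = gibbs.
  apply: norm1_eq0; apply/eqP; rewrite -sqrf_eq0 eq_le sqr_ge0 andbT.
  have := ps_min _ (conj (fun i => ltW (gibbs_gt0 i)) gibbs1).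
  have := pinsker gibbs_gt0 gibbs1 sps.
  by rewrite !FE_gibbs ?KL_id //; [lra | split=> // i; exact: ltW].
move=> q sq; rewrite ps_gibbs !FE_gibbs ?KL_id //; last by split=> // i; exact: ltW.
by have := pinsker gibbs_gt0 gibbs1 sq; lra.
Qed.
End Entropy.

Lemma be_the_leader (R : realDomainType) (X : Type) (F l : nat -> X -> R)
    (D : X -> X -> R) (p : nat -> X) (T : nat) (q : X) :
  (forall t x, F t.+1 x = F t x + l t.+1 x) ->
  (forall t, (t < T)%N -> D (p t.+1) (p t) <= F t (p t.+1) - F t (p t)) ->
  F T (p T) <= F T q ->
  \sum_(1 <= t < T.+1) l t (p t)
    <= F T q - F 0%N (p 0%N) - \sum_(1 <= t < T.+1) D (p t) (p t.-1).
Proof.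
move=> FS growth minT; rewrite !big_add1 /=.
suff : \sum_(0 <= t < T) l t.+1 (p t.+1) <=
       \sum_(0 <= t < T) (F t.+1 (p t.+1) - F t (p t)) - \sum_(0 <= t < T) D (p t.+1) (p t).
  by rewrite (telescope_sumr (fun t => F t (p t))) //; lra.
rewrite -sumrB; apply: ler_sum_nat => t /= tT.
by have := growth t tT; rewrite FS; lra.
Qed.

Definition cumsum (R : nmodType) (f : nat -> R) (t : nat) : R := \sum_(1 <= j < t.+1) f j.

Lemma cumsum0 (R : nmodType) (f : nat -> R) : cumsum f 0 = 0.
Proof. by rewrite /cumsum big_geq. Qed.

Lemma cumsumS (R : nmodType) (f : nat -> R) t : cumsum f t.+1 = cumsum f t + f t.+1.
Proof. by rewrite /cumsum big_nat_recr. Qed.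

Definition qloss (R : numFieldType) (c x : R) : R := 2^-1 * x ^+ 2 - c * x.

Lemma qlossE (R : numFieldType) (c x : R) :
  qloss c x = 2^-1 * (x - c) ^+ 2 - 2^-1 * c ^+ 2.
Proof. by rewrite /qloss; field. Qed.

Lemma qloss_argmin (R : realFieldType) (I : finType) (c w : I -> R) :
  (forall v, \sum_k qloss (c k) (w k) <= \sum_k qloss (c k) (v k)) -> w = c.
Proof.
move=> w_min.
have gap : \sum_k qloss (c k) (w k) - \sum_k qloss (c k) (c k) = \sum_k 2^-1 * (w k - c k) ^+ 2.
  by rewrite -sumrB; apply: eq_bigr => k _; rewrite !qlossE subrr; ring.
have sq_ge0 k : 0 <= 2^-1 * (w k - c k) ^+ 2 by rewrite mulr_ge0 ?sqr_ge0.
have gap0 : \sum_k 2^-1 * (w k - c k) ^+ 2 = 0.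
  by apply: le_anti; rewrite -[X in X <= 0]gap subr_le0 w_min sumr_ge0.
apply/funext => k; have /eqP := psumr_eq0P (fun j _ => sq_ge0 j) gap0 (i := k) isT.
by rewrite mulf_eq0 invr_eq0 pnatr_eq0 sqrf_eq0 subr_eq0 => /eqP.
Qed.

Section OptimisticQuadratic.
Variables (R : realFieldType) (a b : nat -> R).
Hypothesis a_gt0 : forall t, (0 < t)%N -> 0 < a t.

Let S := cumsum a.
Let C := cumsum (fun j => a j * b j).

Lemma cumsum_gt0 t : (0 < t)%N -> 0 < S t.
Proof.
case: t => // t _; rewrite /S /cumsum big_nat_recr //= ltr_pwDr ?a_gt0 //.
rewrite big_nat_cond; apply: sumr_ge0 => j /andP[/andP[j_gt0 _] _].
by rewrite ltW ?a_gt0.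
Qed.

Lemma cumsum_ge0 t : 0 <= S t.
Proof. by case: t => [|t]; [rewrite /S cumsum0 | exact/ltW/cumsum_gt0]. Qed.

Lemma cumsum_qloss t x :
  cumsum (fun j => a j * qloss (b j) x) t = 2^-1 * S t * x ^+ 2 - C t * x.
Proof.
rewrite /S /C /cumsum /qloss mulr_sumr !mulr_suml -sumrB.
by apply: eq_bigr => j _; ring.
Qed.

Definition leader_value t := - C t ^+ 2 / (2 * S t).

Definition optimistic_iterate t := (C t.-1 + a t * b t.-1) / S t.

Lemma leader_value_le t x : leader_value t <= cumsum (fun j => a j * qloss (b j) x) t.
Proof.
rewrite cumsum_qloss /leader_value; case: (posnP t) => [->|t_gt0].
  by rewrite /S /C !cumsum0; lra.
have S_gt0 := cumsum_gt0 t_gt0.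
rewrite -subr_ge0.
have -> : 2^-1 * S t * x ^+ 2 - C t * x - - C t ^+ 2 / (2 * S t)
          = S t / 2 * (x - C t / S t) ^+ 2 by field; rewrite gt_eqF.
by rewrite mulr_ge0 ?sqr_ge0 ?divr_ge0 ?ltW.
Qed.

Lemma optimistic_step t : (0 < t)%N ->
  a t * qloss (b t) (optimistic_iterate t)
    <= leader_value t - leader_value t.-1 + a t ^+ 2 / (2 * S t) * (b t - b t.-1) ^+ 2.
Proof.
case: t => // s _; rewrite /optimistic_iterate /leader_value /S /C !cumsumS /qloss /=.
have := a_gt0 (ltn0Sn s); case: (posnP s) => [->|s_gt0].
  rewrite !cumsum0 !add0r expr0n /= oppr0 mul0r subr0.
  move: (a 1) (b 1) (b 0) => a1 b1 b0 a1_gt0.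
  by rewrite le_eqVlt; apply/orP; left; apply/eqP; field; rewrite gt_eqF.
have := cumsum_gt0 s_gt0; rewrite /S.
move: (cumsum a s) (cumsum (fun j => a j * b j) s) (a s.+1) (b s.+1) (b s).
move=> S' C' a' b' b'' S'_gt0 a'_gt0.
rewrite -subr_ge0; set x := (C' + a' * b'') / (S' + a').
have -> : - (C' + a' * b') ^+ 2 / (2 * (S' + a')) - - C' ^+ 2 / (2 * S')
    + a' ^+ 2 / (2 * (S' + a')) * (b' - b'') ^+ 2 - a' * (2^-1 * x ^+ 2 - b' * x)
    = S' / 2 * (x - C' / S') ^+ 2.
  by rewrite /x; field; rewrite (gt_eqF S'_gt0) (gt_eqF (addr_gt0 S'_gt0 a'_gt0)).
by rewrite mulr_ge0 ?sqr_ge0 ?divr_ge0 ?ltW.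
Qed.

Lemma optimistic_regret T (ws : nat -> R) x :
  (forall t, (0 < t <= T)%N -> ws t = optimistic_iterate t) ->
  cumsum (fun t => a t * qloss (b t) (ws t)) T - cumsum (fun t => a t * qloss (b t) x) T
    <= cumsum (fun t => a t ^+ 2 / (2 * S t) * (b t - b t.-1) ^+ 2) T.
Proof.
move=> ws_opt; have := leader_value_le T x.
suff : cumsum (fun t => a t * qloss (b t) (ws t)) T
       <= leader_value T + cumsum (fun t => a t ^+ 2 / (2 * S t) * (b t - b t.-1) ^+ 2) T.
  lra.
have telescope : cumsum (fun t => leader_value t - leader_value t.-1) T = leader_value T.
  rewrite /cumsum big_add1 /= (telescope_sumr leader_value) //.
  by rewrite /leader_value /S /C !cumsum0 expr0n /= oppr0 mul0r subr0.
rewrite -telescope /cumsum -big_split /=; apply: ler_sum_nat => t /andP[t_gt0 tT].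
by rewrite ws_opt ?t_gt0 //; exact: optimistic_step.
Qed.

End OptimisticQuadratic.

Lemma horizon_bound (R : rcfType) (L g t s : R) : 0 <= L -> 0 < g -> 0 <= t ->
  2 * s = t * (t + 1) -> 4 * Num.sqrt L / g <= t -> 8 * L <= s * g ^+ 2.
Proof.
move=> L_ge0 g_gt0 t_ge0 s_eq; rewrite ler_pdivrMr // => le_tg.
have sqrt_ge0 : 0 <= 4 * Num.sqrt L by rewrite mulr_ge0 ?sqrtr_ge0.
have := ler_pM sqrt_ge0 sqrt_ge0 le_tg le_tg; have := sqr_sqrtr L_ge0.
have := congr1 (fun x => x * g ^+ 2) s_eq; have : 0 <= t * g ^+ 2 by rewrite mulr_ge0 ?sqr_ge0.
move=> /= *; lra.
Qed.

Section Game.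
Variables (R : realType) (n d : nat).
Implicit Types (A : 'I_n -> 'I_d -> R) (q : 'I_n -> R).

Definition tmul A q (k : 'I_d) : R := \sum_i q i * A i k.

Lemma tmulB A (p q : 'I_n -> R) k : tmul A p k - tmul A q k = tmul A (fun i => p i - q i) k.
Proof. by rewrite /tmul -sumrB; apply: eq_bigr => i _; rewrite mulrBl. Qed.

Lemma neg_gfunE A (w : 'I_d -> R) q : - gfun A w q = \sum_k qloss (tmul A q k) (w k).
Proof.
rewrite /gfun; have -> : \sum_i q i * dotd (A i) w = \sum_k tmul A q k * w k.
  rewrite /dotd /tmul; under eq_bigr do rewrite mulr_sumr.
  rewrite exchange_big; apply: eq_bigr => k _; rewrite mulr_suml.
  by apply: eq_bigr => i _; rewrite mulrA.
by rewrite /sqnorm2 opprB mulr_sumr -sumrB.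
Qed.

Lemma gfun_simplexE A (w : 'I_d -> R) q : simplex q ->
  gfun A w q = \sum_i q i * (dotd (A i) w - 2^-1 * sqnorm2 w).
Proof.
case=> _ q1; under [RHS]eq_bigr do rewrite mulrBr.
by rewrite sumrB -mulr_suml q1 mul1r.
Qed.

Lemma normr_dotd_le (u v : 'I_d -> R) : `|dotd u v| <= 2^-1 * (sqnorm2 u + sqnorm2 v).
Proof.
have sq_ge0 (s : R) : 0 <= \sum_k (u k + s * v k) ^+ 2 by apply: sumr_ge0 => k _; exact: sqr_ge0.
have expand (s : R) : s ^+ 2 = 1 ->
    \sum_k (u k + s * v k) ^+ 2 = sqnorm2 u + sqnorm2 v + 2 * s * dotd u v.
  move=> s2; rewrite /sqnorm2 /dotd -big_split mulr_sumr -big_split /=.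
  by apply: eq_bigr => k _; rewrite sqrrD exprMn s2 mul1r; ring.
have := sq_ge0 1; have := sq_ge0 (-1).
rewrite !expand ?expr1n ?sqrrN ?expr1n // ler_norml; lra.
Qed.

Lemma sqnorm2_tmul_le A z : (forall i, sqnorm2 (A i) <= 1) ->
  sqnorm2 (tmul A z) <= norm1 z ^+ 2.
Proof.
move=> A_le1.
have -> : sqnorm2 (tmul A z) = \sum_i \sum_j z i * z j * dotd (A i) (A j).
  rewrite /sqnorm2 /tmul; under eq_bigr do rewrite expr2 mulr_suml.
  under eq_bigr do under eq_bigr do rewrite mulr_sumr.
  rewrite exchange_big; apply: eq_bigr => i _; rewrite exchange_big.
  apply: eq_bigr => j _; rewrite /dotd !mulr_sumr; apply: eq_bigr => k _; ring.
rewrite /norm1 expr2 mulr_suml; apply: ler_sum => i _; rewrite mulr_sumr.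
apply: ler_sum => j _; apply: le_trans (ler_norm _) _; rewrite !normrM.
apply: ler_piMr; first by rewrite mulr_ge0.
by apply: le_trans (normr_dotd_le _ _) _; have := A_le1 i; have := A_le1 j; lra.
Qed.

Lemma alpha_gt0 t : (0 < t)%N -> 0 < alpha R t.
Proof. by rewrite /alpha ltr0n. Qed.

Lemma cumsum_alpha t : 2 * cumsum (alpha R) t = t%:R * (t%:R + 1).
Proof.
elim: t => [|t IH]; first by rewrite cumsum0 mulr0 mul0r.
by rewrite cumsumS mulrDr IH /alpha -addn1 natrD; ring.
Qed.

Lemma alpha_ratio_le1 t : alpha R t ^+ 2 / (2 * cumsum (alpha R) t) <= 1.
Proof.
case: t => [|t]; first by rewrite /alpha expr0n /= mul0r ler01.
rewrite cumsum_alpha ler_pdivrMr ?mulr_gt0 ?addr_gt0 ?ltr0n // mul1r /alpha.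
by rewrite expr2 ler_pM2l ?ltr0n // lerDl.
Qed.

Lemma obj_wE A (p : nat -> 'I_n -> R) t (w : 'I_d -> R) : (0 < t)%N ->
  obj_w A p t w = cumsum (alpha R) t *
    \sum_k qloss (optimistic_iterate (alpha R) (fun j => tmul A (p j) k) t) (w k).
Proof.
case: t => // s _; rewrite /obj_w.
under eq_bigr do rewrite neg_gfunE mulr_sumr.
rewrite neg_gfunE mulr_sumr exchange_big -big_split mulr_sumr /=.
apply: eq_bigr => k _.
rewrite (_ : \sum_(1 <= j < s.+1) _
             = cumsum (fun j => alpha R j * qloss (tmul A (p j) k) (w k)) s) //.
rewrite cumsum_qloss /optimistic_iterate cumsumS /qloss /=.
have := cumsum_gt0 alpha_gt0 (ltn0Sn s); rewrite cumsumS.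
move: (cumsum (alpha R) s) (cumsum (fun j => alpha R j * tmul A (p j) k) s) (alpha R s.+1).
move=> S C a S_gt0.
by field; rewrite gt_eqF.
Qed.

Lemma sum_alpha_neg_gfun A (u : nat -> 'I_d -> R) (p : nat -> 'I_n -> R) T :
  \sum_(1 <= t < T.+1) alpha R t * - gfun A (u t) (p t)
    = \sum_k cumsum (fun t => alpha R t * qloss (tmul A (p t) k) (u t k)) T.
Proof. by under eq_bigr do rewrite neg_gfunE mulr_sumr; exact: exchange_big. Qed.

Lemma regret_w A T (w : nat -> 'I_d -> R) (p : nat -> 'I_n -> R) :
  (forall i, sqnorm2 (A i) <= 1) ->
  (forall t, (1 <= t <= T)%N -> forall w', obj_w A p t (w t) <= obj_w A p t w') ->
  forall w' : 'I_d -> R,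
  \sum_(1 <= t < T.+1) alpha R t * (- gfun A (w t) (p t))
  - \sum_(1 <= t < T.+1) alpha R t * (- gfun A w' (p t))
  <= \sum_(1 <= t < T.+1) norm1 (fun i => p t i - p t.-1 i) ^+ 2.
Proof.
move=> A_le1 w_min w'.
pose b k j := tmul A (p j) k.
have w_opt k t : (0 < t <= T)%N -> w t k = optimistic_iterate (alpha R) (b k) t.
  move=> /andP[t_gt0 tT]; suff -> : w t = fun k => optimistic_iterate (alpha R) (b k) t by [].
  apply: qloss_argmin => v; rewrite -(ler_pM2l (cumsum_gt0 alpha_gt0 t_gt0)) -!obj_wE //.
  by apply: w_min; rewrite t_gt0.
rewrite (sum_alpha_neg_gfun _ w) (sum_alpha_neg_gfun _ (fun _ => w')) -sumrB.
apply: le_trans (ler_sum _ (fun k _ => optimistic_regret alpha_gt0 (w' k) (w_opt k))) _.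
rewrite exchange_big /=; apply: ler_sum_nat => t _; rewrite -mulr_sumr.
under eq_bigr do rewrite /b tmulB.
rewrite -[X in _ <= X]mul1r; apply: ler_pM => //.
- by rewrite divr_ge0 ?sqr_ge0 ?mulr_ge0 ?(cumsum_ge0 alpha_gt0).
- by rewrite sumr_ge0 // => k _; rewrite sqr_ge0.
- exact: alpha_ratio_le1.
- exact: sqnorm2_tmul_le.
Qed.

Lemma obj_pS A (w : nat -> 'I_d -> R) t q :
  obj_p A w t.+1 q = obj_p A w t q + 4^-1 * (alpha R t.+1 * gfun A (w t.+1) q).
Proof. by rewrite /obj_p big_nat_recr //= mulrDr addrAC. Qed.

Lemma obj_p0 A (w : nat -> 'I_d -> R) q : obj_p A w 0 q = KL q (@uniform R n).
Proof. by rewrite /obj_p big_geq // mulr0 add0r. Qed.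

Lemma obj_p_simplexE A (w : nat -> 'I_d -> R) t q : simplex q ->
  obj_p A w t q = \sum_i 4^-1 * cumsum (fun s => alpha R s *
      (dotd (A i) (w s) - 2^-1 * sqnorm2 (w s))) t * q i + KL q (@uniform R n).
Proof.
move=> sq; rewrite /obj_p; congr (_ + _).
under eq_bigr do rewrite gfun_simplexE // mulr_sumr.
rewrite exchange_big mulr_sumr; apply: eq_bigr => i _.
by rewrite /cumsum -mulrA mulr_suml; congr (_ * _); apply: eq_bigr => s _; ring.
Qed.

Lemma regret_p A T (w : nat -> 'I_d -> R) (p : nat -> 'I_n -> R) :
  (0 < n)%N -> p 0%N = @uniform R n ->
  (forall t, (1 <= t <= T)%N ->
     simplex (p t) /\ forall q, simplex q -> obj_p A w t (p t) <= obj_p A w t q) ->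
  forall q, simplex q ->
  \sum_(1 <= t < T.+1) alpha R t * gfun A (w t) (p t)
  - \sum_(1 <= t < T.+1) alpha R t * gfun A (w t) q
  <= 4 * ln (n%:R : R) - 2 * \sum_(1 <= t < T.+1) norm1 (fun i => p t i - p t.-1 i) ^+ 2.
Proof.
move=> n_gt0 p0 p_min q sq.
have u_gt0 := @uniform_gt0 R n n_gt0; have u1 := @sum_uniform R n n_gt0.
have p_min' t : (t <= T)%N ->
    simplex (p t) /\ forall q, simplex q -> obj_p A w t (p t) <= obj_p A w t q.
  case: t => [_|t tT]; last exact: p_min.
  rewrite p0; split=> [|q' sq']; first by split=> // i; exact: ltW.
  by rewrite !obj_p0 KL_id // KL_ge0.
have := @be_the_leader R _ (obj_p A w) (fun t q => 4^-1 * (alpha R t * gfun A (w t) q))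
  (fun x y => 2^-1 * norm1 (fun i => x i - y i) ^+ 2) p T q (obj_pS A w) _
  ((p_min' T (leqnn T)).2 q sq).
have growth t : (t < T)%N -> 2^-1 * norm1 (fun i => p t.+1 i - p t i) ^+ 2
                             <= obj_p A w t (p t.+1) - obj_p A w t (p t).
  move=> tT; have [sp pm] := p_min' t (ltnW tT).
  exact: argmin_linear_KL_growth u_gt0 (fun q' sq' => obj_p_simplexE A w t sq') sp pm _
    (p_min' t.+1 tT).1.
move=> /(_ growth); rewrite obj_p0 p0 KL_id // subr0 -!mulr_sumr /obj_p.
by have := KL_uniform_le sq; lra.
Qed.

Lemma dotd_wbar (u : 'I_d -> R) (w : nat -> 'I_d -> R) T :
  dotd u (wbar w T) = (\sum_(1 <= t < T.+1) alpha R t * dotd u (w t)) / cumsum (alpha R) T.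
Proof.
have -> : \sum_(1 <= t < T.+1) alpha R t * dotd u (w t)
          = \sum_k u k * \sum_(1 <= t < T.+1) alpha R t * w t k.
  under eq_bigr do rewrite /dotd mulr_sumr.
  rewrite exchange_big; apply: eq_bigr => k _; rewrite mulr_sumr.
  by apply: eq_bigr => t _; ring.
by rewrite /dotd /wbar mulr_suml; apply: eq_bigr => k _; rewrite mulrA.
Qed.

Lemma simplex_vertex (i : 'I_n) : simplex (fun j => (j == i)%:R : R).
Proof.
split=> [j|]; first by rewrite ler0n.
by rewrite (bigD1 i) //= eqxx big1 ?addr0 // => j /negbTE ->.
Qed.

Lemma gfun_vertex_le A (w : 'I_d -> R) (i : 'I_n) :
  gfun A w (fun j => (j == i)%:R) <= dotd (A i) w.
Proof.
rewrite /gfun (bigD1 i) //= eqxx mul1r big1 ?addr0 => [|j /negbTE ->]; last by rewrite mul0r.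
by rewrite gerBl mulr_ge0 // sumr_ge0 // => k _; rewrite sqr_ge0.
Qed.

Lemma gfun_margin_ge A (gamma : R) (wstar : 'I_d -> R) q :
  sqnorm2 wstar = 1 -> (forall i, gamma <= dotd (A i) wstar) -> 0 < gamma ->
  simplex q -> gamma ^+ 2 / 2 <= gfun A (fun k => gamma * wstar k) q.
Proof.
move=> wstar1 margin gamma_gt0 [q_ge0 q1].
have -> : gamma ^+ 2 / 2 = \sum_i q i * (gamma ^+ 2 / 2) by rewrite -mulr_suml q1 mul1r.
rewrite gfun_simplexE //; apply: ler_sum => i _; rewrite ler_wpM2l //.
have -> : dotd (A i) (fun k => gamma * wstar k) = gamma * dotd (A i) wstar.
  by rewrite /dotd mulr_sumr; apply: eq_bigr => k _; ring.
have -> : sqnorm2 (fun k => gamma * wstar k) = gamma ^+ 2.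
  by rewrite /sqnorm2 -[RHS]mulr1 -wstar1 /sqnorm2 mulr_sumr; apply: eq_bigr => k _; ring.
by have := ler_wpM2l (ltW gamma_gt0) (margin i); lra.
Qed.

Lemma wbar_margin_ge0 A T (w : nat -> 'I_d -> R) (p : nat -> 'I_n -> R)
    (gamma : R) (wstar : 'I_d -> R) :
  (0 < n)%N -> (forall i, sqnorm2 (A i) <= 1) -> sqnorm2 wstar = 1 ->
  (forall i, gamma <= dotd (A i) wstar) -> 0 < gamma -> dynamics A T w p ->
  4 * Num.sqrt (ln (n%:R : R)) / gamma <= T%:R ->
  forall i, 0 <= dotd (A i) (wbar w T).
Proof.
move=> n_gt0 A_le1 wstar1 margin gamma_gt0 [p0 [w_min p_min]] T_large i.
have neg_sum (f : nat -> R) :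
    \sum_(1 <= t < T.+1) alpha R t * - f t = - \sum_(1 <= t < T.+1) alpha R t * f t.
  by rewrite -sumrN; apply: eq_bigr => t _; rewrite mulrN.
(* Play [gamma * wstar] against the [p_t] and the vertex [e_i] against the [w_t]. *)
have Rw := regret_w A_le1 w_min (fun k => gamma * wstar k).
rewrite (neg_sum (fun t => gfun A (w t) (p t))) (neg_sum (fun t => gfun A _ (p t))) in Rw.
have Rp := regret_p n_gt0 p0 p_min (simplex_vertex i).
have lead : cumsum (alpha R) T * gamma ^+ 2 / 2
            <= \sum_(1 <= t < T.+1) alpha R t * gfun A (fun k => gamma * wstar k) (p t).
  rewrite /cumsum !mulr_suml; apply: ler_sum_nat => t /andP[t_gt0 tT].
  rewrite -mulrA ler_wpM2l ?ler0n // gfun_margin_ge //.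
  exact: (p_min t (introT andP (conj t_gt0 tT))).1.
have play : \sum_(1 <= t < T.+1) alpha R t * gfun A (w t) (fun j => (j == i)%:R)
            <= \sum_(1 <= t < T.+1) alpha R t * dotd (A i) (w t).
  by apply: ler_sum => t _; rewrite ler_wpM2l ?ler0n ?gfun_vertex_le.
have T_large' : 8 * ln (n%:R : R) <= cumsum (alpha R) T * gamma ^+ 2.
  by apply: horizon_bound T_large; rewrite ?ln_ge0 ?ler1n ?ler0n ?cumsum_alpha.
have N_ge0 : 0 <= \sum_(1 <= t < T.+1) norm1 (fun j => p t j - p t.-1 j) ^+ 2.
  by rewrite sumr_ge0 // => t _; rewrite sqr_ge0.
rewrite dotd_wbar divr_ge0 ?(cumsum_ge0 alpha_gt0) //; lra.
Qed.

Lemma Amat_row_le1 (x : 'I_n -> 'I_d -> R) (y : 'I_n -> R) :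
  (forall i, y i = 1 \/ y i = -1) -> (forall i, sqnorm2 (x i) <= 1) ->
  forall i, sqnorm2 (Amat x y i) <= 1.
Proof.
move=> y_sign x_le1 i; have y2 : y i ^+ 2 = 1 by case: (y_sign i) => ->; rewrite ?sqrrN expr1n.
by rewrite /sqnorm2 /Amat; under eq_bigr do rewrite exprMn y2 mul1r; exact: x_le1.
Qed.
End Game.

Theorem theorem3 (R : realType) :
  (forall (n d : nat) (x : 'I_n -> 'I_d -> R) (y : 'I_n -> R)
     (gamma : R) (T : nat) (w : nat -> 'I_d -> R) (p : nat -> 'I_n -> R),
     data_ok x y gamma -> dynamics (Amat x y) T w p ->
     (* R^w <= 2 sum ||p_t - p_{t-1}||_1^2 *)
     (forall w' : 'I_d -> R,
        \sum_(1 <= t < T.+1) alpha R t * (- gfun (Amat x y) (w t) (p t))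
        - \sum_(1 <= t < T.+1) alpha R t * (- gfun (Amat x y) w' (p t))
        <= 2 * \sum_(1 <= t < T.+1) (norm1 (fun i => p t i - p t.-1 i)) ^+ 2) /\
     (* R^p <= 4 log n - 2 sum ||p_t - p_{t-1}||_1^2 *)
     (forall q : 'I_n -> R, simplex q ->
        \sum_(1 <= t < T.+1) alpha R t * gfun (Amat x y) (w t) (p t)
        - \sum_(1 <= t < T.+1) alpha R t * gfun (Amat x y) (w t) q
        <= 4 * ln (n%:R : R)
           - 2 * \sum_(1 <= t < T.+1) (norm1 (fun i => p t i - p t.-1 i)) ^+ 2)) /\
  (exists C : R, 0 < C /\
     forall (n d : nat) (x : 'I_n -> 'I_d -> R) (y : 'I_n -> R)
       (gamma : R) (T : nat) (w : nat -> 'I_d -> R) (p : nat -> 'I_n -> R),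
       data_ok x y gamma -> dynamics (Amat x y) T w p ->
       C * Num.sqrt (ln (n%:R : R)) / gamma <= T%:R ->
       forall i : 'I_n, 0 <= dotd (Amat x y i) (wbar w T)).
Proof.
split.
  move=> n d x y gamma T w p [n_gt0 [y_sign [x_le1 _]]] [p0 [w_min p_min]].
  have A_le1 := Amat_row_le1 y_sign x_le1.
  split=> [w'|q sq]; last exact: regret_p.
  apply: le_trans (regret_w A_le1 w_min w') _.
  by rewrite ler_peMl ?ler1n // sumr_ge0 // => t _; rewrite sqr_ge0.
exists 4; split=> // n d x y gamma T w p.
move=> [n_gt0 [y_sign [x_le1 [[wstar [wstar1 [margin _]]] gamma_gt0]]]] dyn.
exact: wbar_margin_ge0 n_gt0 (Amat_row_le1 y_sign x_le1) wstar1 margin gamma_gt0 dyn.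
Qed.
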